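(* In the setting below, the map $\psi:W\to\mathbb{R}_+^n$, $\psi(w)=(B_1(w),\dots,B_n(w))$, is injective.
   Context: Setting: $T^*$ is a triangulation of a closed surface $S$ with vertex set $T^0$; $\Sigma=S\setminus N(T^0)$ where $N(T^0)$ is a small open regular disjoint neighborhood of $T^0$; $\Sigma$ has boundary components labeled $1,\dots,n$. $T=T^*\cap\Sigma$ is the ideal triangulation with ideal edges $E$ and ideal faces $F$; $ij$ denotes the ideal edge between boundary components $i,j$ and $ijk$ the ideal face adjacent to boundary components $i,j,k$. $\theta_i^f$ is the length of the side of the right-angled hyperbolic hexagon of face $f=ijk$ (pairwise non-adjacent sides of lengths $l_{ij},l_{jk},l_{ki}$) opposite to the side of length $l_{jk}$, i.e. $\cosh\theta_i^f=\frac{\cosh l_{jk}+\cosh l_{ki}\cosh l_{ij}}{\sinh l_{ki}\sinh l_{ij}}$. Fix $l^0\in\mathbb{R}_+^{|E|}$. $W=\{w\in\mathbb{R}^n: w_i+w_j>-\ln\cosh\frac{l^0_{ij}}{2}\ \forall ij\in E\}$ (admissible discrete conformal factors); for $w\in W$, $\cosh\frac{l_{ij}}{2}=e^{w_i+w_j}\cosh\frac{l^0_{ij}}{2}$, and $B_i(w)=\sum_{f\in F_i}\theta_i^f$, where $F_i$ is the set of faces adjacent to boundary component $i$. *)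

From mathcomp Require Import all_boot.
From Stdlib Require Import Reals.

Set Implicit Arguments.
Unset Strict Implicit.
Unset Printing Implicit Defensive.

(* ---------- Combinatorial model of a triangulation T^* of a closed surface ----------
   T^* is given as a finite set F of triangles glued pairwise along their sides.
   A corner / side of T^* is a pair (f,k) : F * 'I_3.  Side k of triangle f is the
   side opposite to corner k; its endpoints are corners k+1 and k+2 (mod 3).
   [sigma] : sides -> sides is the gluing (a fixed-point free involution),
   [rev s] says whether the gluing of side s to side (sigma s) matches the endpoints
   (k+1,k+2) with (l+2,l+1) (rev = true) or with (l+1,l+2) (rev = false).
   Edges of T^* (= ideal edges E of T) are the sigma-orbits {s, sigma s}.
   Vertices of T^* (= boundary components of Sigma) are the classes of corners under
   the equivalence generated by the gluing; they are labelled by 'I_n via [vert]. *)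

Definition succ1 (k : 'I_3) : 'I_3 := inord ((k.+1) %% 3).
Definition succ2 (k : 'I_3) : 'I_3 := inord ((k.+2) %% 3).

Section Combinatorics.
Variable F : finType.

Definition sideA (s : F * 'I_3) : F * 'I_3 := (s.1, succ1 s.2).
Definition sideB (s : F * 'I_3) : F * 'I_3 := (s.1, succ2 s.2).

Variable sigma : F * 'I_3 -> F * 'I_3.
Variable rev : F * 'I_3 -> bool.

Definition imA (s : F * 'I_3) := if rev s then sideB (sigma s) else sideA (sigma s).
Definition imB (s : F * 'I_3) := if rev s then sideA (sigma s) else sideB (sigma s).

Definition corner_rel : rel (F * 'I_3) := fun c d =>
  [exists s, ((c == sideA s) && (d == imA s)) || ((c == sideB s) && (d == imB s))].

Definition face_rel : rel F := fun f g => [exists k : 'I_3, (sigma (f, k)).1 == g].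

Definition closed_surface_triangulation (n : nat) (vert : F * 'I_3 -> 'I_n) : Prop :=
  (forall s, sigma (sigma s) = s) /\
  (forall s, sigma s <> s) /\
  (forall s, rev (sigma s) = rev s) /\
  (forall f g : F, connect face_rel f g) /\
  (forall c d, (vert c == vert d) = connect corner_rel c d) /\
  (forall i : 'I_n, exists c, vert c = i).

End Combinatorics.

Open Scope R_scope.

Definition acosh (x : R) : R := ln (x + sqrt (x * x - 1)).

Section Geometry.
Variables (F : finType) (n : nat) (vert : F * 'I_3 -> 'I_n).
Variable l0 : F * 'I_3 -> R.   (* initial length l^0 of the edge containing a side *)

Definition admissible (w : 'I_n -> R) : Prop :=
  forall s : F * 'I_3,
    w (vert (sideA s)) + w (vert (sideB s)) > - ln (cosh (l0 s / 2)).

Definition len (w : 'I_n -> R) (s : F * 'I_3) : R :=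
  2 * acosh (exp (w (vert (sideA s)) + w (vert (sideB s))) * cosh (l0 s / 2)).

(* theta_i^f for corner c = (f,k): the side of the right-angled hexagon opposite
   to the side of length l_{jk}, where jk is the side of f opposite to corner k *)
Definition theta (w : 'I_n -> R) (c : F * 'I_3) : R :=
  let a := len w c in
  let b := len w (sideA c) in
  let d := len w (sideB c) in
  acosh ((cosh a + cosh b * cosh d) / (sinh b * sinh d)).

Definition Bcurv (w : 'I_n -> R) (i : 'I_n) : R :=
  \big[Rplus/0]_(c : F * 'I_3 | vert c == i) theta w c.

End Geometry.

(* Put u = w' - w and move along the segment w + t u.  Each side length then
   satisfies l' = 2 (u_i + u_j) coth (l / 2), and on every face f the pairing
   sum_k u_k theta_k has derivative 2 Q / sqrt G, where G > 0 and
   Q <= -2 sum_k (cosh l_k - 1) u_k^2 is the Jacobian quadratic form of the face.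
   By the mean value theorem the pairing decreases from w to w' on every face,
   strictly on the faces where u does not vanish.  Summing over faces,
   sum_i u_i (B_i(w') - B_i(w)) < 0 unless u = 0, so B(w) = B(w') forces w = w'. *)

From HB Require Import structures.
From mathcomp Require Import all_boot.
From Stdlib Require Import Reals Lra Psatz FunctionalExtensionality.
From Coquelicot Require Import Coquelicot.
Open Scope R_scope.

Lemma is_derive_cosh x : is_derive cosh x (sinh x).
Proof. exact/is_derive_Reals/derivable_pt_lim_cosh. Qed.

Lemma is_derive_sinh x : is_derive sinh x (cosh x).
Proof. exact/is_derive_Reals/derivable_pt_lim_sinh. Qed.

Lemma sinh_gt0 x : 0 < x -> 0 < sinh x.
Proof. by move=> x_gt0; rewrite -sinh_0; apply: sinh_lt. Qed.

Lemma cosh_sqr_sub_sinh_sqr x : cosh x * cosh x - sinh x * sinh x = 1.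
Proof.
rewrite /cosh /sinh exp_Ropp; field; exact/Rgt_not_eq/exp_pos.
Qed.

Lemma sinh_lt_cosh x : sinh x < cosh x.
Proof. by rewrite /cosh /sinh; have := exp_pos (- x); lra. Qed.

Lemma cosh_ge1 x : 1 <= cosh x.
Proof.
have := cosh_sqr_sub_sinh_sqr x; have := sinh_lt_cosh x.
have : 0 < cosh x by rewrite /cosh; have := exp_pos x; have := exp_pos (- x); lra.
nra.
Qed.

Lemma cosh_gt1 x : 0 < x -> 1 < cosh x.
Proof.
move=> x_gt0; have := sinh_gt0 _ x_gt0; have := cosh_ge1 x.
have := cosh_sqr_sub_sinh_sqr x; nra.
Qed.

Lemma acosh_gt0 x : 1 < x -> 0 < acosh x.
Proof.
move=> x_gt1; rewrite /acosh -ln_1; apply: ln_increasing; first lra.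
have := sqrt_pos (x * x - 1); lra.
Qed.

Lemma is_derive_acosh x : 1 < x -> is_derive acosh x (/ sqrt (x * x - 1)).
Proof.
move=> x_gt1; have sq_gt0 : 0 < sqrt (x * x - 1) by apply: sqrt_lt_R0; nra.
unfold acosh; auto_derive; replace (x * x + - (1)) with (x * x - 1) by ring.
- repeat split; nra.
- field; lra.
Qed.

Definition coth_half (l : R) : R := (exp l + 1) / (exp l - 1).

Lemma coth_half_acosh x : 1 < x -> coth_half (2 * acosh x) = x / sqrt (x * x - 1).
Proof.
move=> x_gt1; set s := sqrt (x * x - 1).
have s_gt0 : 0 < s by apply: sqrt_lt_R0; nra.
have ss : s * s = x * x - 1 by apply: sqrt_sqrt; nra.
have e2 : exp (2 * acosh x) = (x + s) * (x + s).
  by rewrite /acosh -/s -Rplus_diag exp_plus exp_ln //; lra.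
have num : (x + s) * (x + s) + 1 = 2 * x * (x + s) by nra.
have den : (x + s) * (x + s) - 1 = 2 * s * (x + s) by nra.
by rewrite /coth_half e2 num den; field; lra.
Qed.

Definition hexagon_side (a b c : R) : R :=
  acosh ((cosh a + cosh b * cosh c) / (sinh b * sinh c)).

(* [(cosh a + cosh b cosh c)^2 - sinh^2 b sinh^2 c], written symmetrically. *)
Definition hexagon_gram (ca cb cc : R) : R :=
  ca * ca + cb * cb + cc * cc + 2 * ca * cb * cc - 1.

Definition hexagon_side_deriv (a b c da db dc : R) : R :=
  ((sinh a * da + sinh b * db * cosh c + cosh b * sinh c * dc) * (sinh b * sinh c)
   - (cosh a + cosh b * cosh c) * (cosh b * db * sinh c + sinh b * cosh c * dc))
  / (sinh b * sinh c * sqrt (hexagon_gram (cosh a) (cosh b) (cosh c))).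

Lemma hexagon_gram_gt0 a b c : 0 < hexagon_gram (cosh a) (cosh b) (cosh c).
Proof.
have := cosh_ge1 a; have := cosh_ge1 b; have := cosh_ge1 c; rewrite /hexagon_gram.
move=> ha hb hc; have : 1 <= cosh a * cosh b by nra.
nra.
Qed.

Lemma hexagon_ratio_gt1 a b c : 0 < b -> 0 < c ->
  1 < (cosh a + cosh b * cosh c) / (sinh b * sinh c).
Proof.
move=> /sinh_gt0 sb_gt0 /sinh_gt0 sc_gt0; apply/Rlt_div_r; first nra.
have := cosh_ge1 a; have := sinh_lt_cosh b; have := sinh_lt_cosh c; nra.
Qed.

Lemma sqrt_hexagon_ratio a b c : 0 < b -> 0 < c ->
  let r := (cosh a + cosh b * cosh c) / (sinh b * sinh c) in
  sqrt (r * r - 1) = sqrt (hexagon_gram (cosh a) (cosh b) (cosh c)) / (sinh b * sinh c).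
Proof.
move=> /sinh_gt0 sb_gt0 /sinh_gt0 sc_gt0 r; have G_gt0 := hexagon_gram_gt0 a b c.
rewrite -(sqrt_Rsqr (_ / _)); last first.
  by apply/Rlt_le/Rdiv_lt_0_compat; [apply: sqrt_lt_R0 | nra].
congr sqrt; rewrite Rsqr_div' Rsqr_sqrt; last lra.
have := cosh_sqr_sub_sinh_sqr b; have := cosh_sqr_sub_sinh_sqr c.
rewrite /r /hexagon_gram /Rsqr => ? ?; field_simplify_eq; nra.
Qed.

Lemma is_derive_hexagon_side (la lb lc : R -> R) t da db dc :
  is_derive la t da -> is_derive lb t db -> is_derive lc t dc ->
  0 < lb t -> 0 < lc t ->
  is_derive (fun t => hexagon_side (la t) (lb t) (lc t)) t
    (hexagon_side_deriv (la t) (lb t) (lc t) da db dc).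
Proof.
move=> Da Db Dc lb_gt0 lc_gt0.
have Ca := is_derive_comp _ _ _ _ _ (is_derive_cosh _) Da.
have Cb := is_derive_comp _ _ _ _ _ (is_derive_cosh _) Db.
have Cc := is_derive_comp _ _ _ _ _ (is_derive_cosh _) Dc.
have Sb := is_derive_comp _ _ _ _ _ (is_derive_sinh _) Db.
have Sc := is_derive_comp _ _ _ _ _ (is_derive_sinh _) Dc.
have Num := is_derive_plus _ _ _ _ _ Ca (is_derive_mult _ _ _ _ _ Cb Cc Rmult_comm).
have Den := is_derive_mult _ _ _ _ _ Sb Sc Rmult_comm.
have sb_gt0 := sinh_gt0 _ lb_gt0; have sc_gt0 := sinh_gt0 _ lc_gt0.
have Ratio := is_derive_div _ _ _ _ _ Num Den (Rgt_not_eq _ _ (Rmult_lt_0_compat _ _ sb_gt0 sc_gt0)).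
pose ratio t := (cosh (la t) + cosh (lb t) * cosh (lc t)) / (sinh (lb t) * sinh (lc t)).
have D := is_derive_comp acosh ratio t _ _
  (is_derive_acosh _ (hexagon_ratio_gt1 (la t) _ _ lb_gt0 lc_gt0)) Ratio.
rewrite sqrt_hexagon_ratio // in D; apply: (eq_ind _ (is_derive _ t) D).
have := sqrt_lt_R0 _ (hexagon_gram_gt0 (la t) (lb t) (lc t)).
rewrite /scal /= /mult /= /plus /= /hexagon_side_deriv => sqrtG_gt0.
by field; repeat split; nra.
Qed.

(* [cosh] and [sinh] as rational functions of [exp x], so that [field] can
   check [face_dpairingE]. *)
Definition ch (y : R) : R := (y + / y) / 2.
Definition sh (y : R) : R := (y - / y) / 2.

Lemma cosh_ch x : cosh x = ch (exp x).
Proof. by rewrite /cosh /ch exp_Ropp. Qed.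

Lemma sinh_sh x : sinh x = sh (exp x).
Proof. by rewrite /sinh /sh exp_Ropp. Qed.

Lemma hexagon_gram_rot ca cb cc : hexagon_gram cb cc ca = hexagon_gram ca cb cc.
Proof. by rewrite /hexagon_gram; ring. Qed.

Definition face_form (p0 p1 p2 U0 U1 U2 : R) : R :=
  let s0 := U1 + U2 in let s1 := U2 + U0 in let s2 := U0 + U1 in
  4 * (U0 * U1 + U1 * U2 + U2 * U0) - 2 * (p0 * U0 * U0 + p1 * U1 * U1 + p2 * U2 * U2)
  - (2 + p0 + p1 + p2) * (s0 * s0 / p0 + s1 * s1 / p1 + s2 * s2 / p2).

Lemma face_form_le p0 p1 p2 U0 U1 U2 : 0 < p0 -> 0 < p1 -> 0 < p2 ->
  face_form p0 p1 p2 U0 U1 U2 <= - 2 * (p0 * U0 * U0 + p1 * U1 * U1 + p2 * U2 * U2).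
Proof.
move=> p0_gt0 p1_gt0 p2_gt0; pose P := 2 + p0 + p1 + p2.
have le_div p s : 0 < p -> p <= P -> s * s <= P * (s * s / p).
  move=> p_gt0 p_le; have -> : P * (s * s / p) = s * s + (P - p) * (s * s) / p.
    by field; lra.
  have : 0 <= (P - p) * (s * s) / p.
    by apply: Rdiv_le_0_compat => //; have := Rle_0_sqr s; rewrite /Rsqr; nra.
  lra.
have := le_div p0 (U1 + U2) p0_gt0 ltac:(rewrite /P; lra).
have := le_div p1 (U2 + U0) p1_gt0 ltac:(rewrite /P; lra).
have := le_div p2 (U0 + U1) p2_gt0 ltac:(rewrite /P; lra).
have := Rle_0_sqr (U0 - U1); have := Rle_0_sqr (U1 - U2); have := Rle_0_sqr (U2 - U0).
rewrite /face_form /Rsqr -/P; nra.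
Qed.

(* Derivative of [sum_k U_k hexagon_side] when each side length moves as
   [L_k' = 2 (U_(k+1) + U_(k+2)) coth (L_k / 2)], as [len] does along [w + t U]. *)
Definition face_dpairing (L0 L1 L2 U0 U1 U2 : R) : R :=
  let dL0 := 2 * (U1 + U2) * coth_half L0 in
  let dL1 := 2 * (U2 + U0) * coth_half L1 in
  let dL2 := 2 * (U0 + U1) * coth_half L2 in
  U0 * hexagon_side_deriv L0 L1 L2 dL0 dL1 dL2
  + U1 * hexagon_side_deriv L1 L2 L0 dL1 dL2 dL0
  + U2 * hexagon_side_deriv L2 L0 L1 dL2 dL0 dL1.

Lemma face_dpairingE L0 L1 L2 U0 U1 U2 : 0 < L0 -> 0 < L1 -> 0 < L2 ->
  face_dpairing L0 L1 L2 U0 U1 U2 =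
  2 * face_form (cosh L0 - 1) (cosh L1 - 1) (cosh L2 - 1) U0 U1 U2
  / sqrt (hexagon_gram (cosh L0) (cosh L1) (cosh L2)).
Proof.
move=> L0_gt0 L1_gt0 L2_gt0; have := sqrt_lt_R0 _ (hexagon_gram_gt0 L0 L1 L2).
have := exp_increasing _ _ L0_gt0; have := exp_increasing _ _ L1_gt0.
have := exp_increasing _ _ L2_gt0.
rewrite /face_dpairing /hexagon_side_deriv (hexagon_gram_rot (cosh L1)).
rewrite (hexagon_gram_rot (cosh L0)) /face_form /coth_half !cosh_ch !sinh_sh /ch /sh exp_0.
set y0 := exp L0; set y1 := exp L1; set y2 := exp L2; set G := sqrt _.
by move=> y2_gt1 y1_gt1 y0_gt1 G_gt0; field; repeat split; try lra; move=> ?; nra.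
Qed.

Lemma face_dpairing_le L0 L1 L2 U0 U1 U2 : 0 < L0 -> 0 < L1 -> 0 < L2 ->
  face_dpairing L0 L1 L2 U0 U1 U2 <= 0 /\
  (U0 <> 0 \/ U1 <> 0 \/ U2 <> 0 -> face_dpairing L0 L1 L2 U0 U1 U2 < 0).
Proof.
move=> L0_gt0 L1_gt0 L2_gt0; rewrite face_dpairingE // /Rdiv.
have iG := Rinv_0_lt_compat _ (sqrt_lt_R0 _ (hexagon_gram_gt0 L0 L1 L2)).
have p_gt0 L : 0 < L -> 0 < cosh L - 1 by move/cosh_gt1; lra.
have := face_form_le _ _ _ U0 U1 U2 (p_gt0 _ L0_gt0) (p_gt0 _ L1_gt0) (p_gt0 _ L2_gt0).
have sq_ge0 L U : 0 < L -> 0 <= (cosh L - 1) * U * U by move/p_gt0 => ?; nra.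
have sq_gt0 L U : 0 < L -> U <> 0 -> 0 < (cosh L - 1) * U * U.
  by move/p_gt0 => ? /Rsqr_pos_lt; rewrite /Rsqr; nra.
have := sq_ge0 _ U0 L0_gt0; have := sq_ge0 _ U1 L1_gt0; have := sq_ge0 _ U2 L2_gt0.
move=> ? ? ? form_le; split; first nra.
by case=> [/(sq_gt0 _ _ L0_gt0)|[/(sq_gt0 _ _ L1_gt0)|/(sq_gt0 _ _ L2_gt0)]]; nra.
Qed.

Lemma face_pairing_path_decrease (L0 L1 L2 : R -> R) U0 U1 U2 :
  (forall t, 0 <= t <= 1 -> 0 < L0 t /\ is_derive L0 t (2 * (U1 + U2) * coth_half (L0 t))) ->
  (forall t, 0 <= t <= 1 -> 0 < L1 t /\ is_derive L1 t (2 * (U2 + U0) * coth_half (L1 t))) ->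
  (forall t, 0 <= t <= 1 -> 0 < L2 t /\ is_derive L2 t (2 * (U0 + U1) * coth_half (L2 t))) ->
  let h t := U0 * hexagon_side (L0 t) (L1 t) (L2 t) + U1 * hexagon_side (L1 t) (L2 t) (L0 t)
             + U2 * hexagon_side (L2 t) (L0 t) (L1 t) in
  h 1 <= h 0 /\ (U0 <> 0 \/ U1 <> 0 \/ U2 <> 0 -> h 1 < h 0).
Proof.
move=> D0 D1 D2 h.
have Dh t : 0 <= t <= 1 -> derivable_pt_lim h t (face_dpairing (L0 t) (L1 t) (L2 t) U0 U1 U2).
  move=> t01; apply/is_derive_Reals.
  have [L0_gt0 dL0] := D0 t t01; have [L1_gt0 dL1] := D1 t t01; have [L2_gt0 dL2] := D2 t t01.
  have T0 := is_derive_scal _ _ U0 _ (is_derive_hexagon_side _ _ _ _ _ _ _ dL0 dL1 dL2 L1_gt0 L2_gt0).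
  have T1 := is_derive_scal _ _ U1 _ (is_derive_hexagon_side _ _ _ _ _ _ _ dL1 dL2 dL0 L2_gt0 L0_gt0).
  have T2 := is_derive_scal _ _ U2 _ (is_derive_hexagon_side _ _ _ _ _ _ _ dL2 dL0 dL1 L0_gt0 L1_gt0).
  exact (is_derive_plus _ _ _ _ _ (is_derive_plus _ _ _ _ _ T0 T1) T2).
have [c [h10 c01]] := MVT_cor2 h _ 0 1 Rlt_0_1 Dh.
have c01' : 0 <= c <= 1 by lra.
have [L0_gt0 _] := D0 c c01'; have [L1_gt0 _] := D1 c c01'; have [L2_gt0 _] := D2 c c01'.
have [le0 lt0] := face_dpairing_le _ _ _ U0 U1 U2 L0_gt0 L1_gt0 L2_gt0.
rewrite Rminus_0_r Rmult_1_r in h10.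
by split; [|move/lt0]; lra.
Qed.

HB.instance Definition _ := Monoid.isComLaw.Build R 0 Rplus
  (fun a b c => esym (Rplus_assoc a b c)) Rplus_comm Rplus_0_l.

Lemma Rsum_lt (I : finType) (G H : I -> R) j :
  (forall i, G i <= H i) -> G j < H j -> \big[Rplus/0]_i G i < \big[Rplus/0]_i H i.
Proof.
move=> GH Gj; rewrite (bigD1 j) // [X in _ < X](bigD1 j) //=.
have : \big[Rplus/0]_(i | i != j) G i <= \big[Rplus/0]_(i | i != j) H i.
  by apply: (big_ind2 Rle) => //; [exact: Rle_refl | move=> *; lra].
lra.
Qed.

Lemma succ1_succ1 (k : 'I_3) : succ1 (succ1 k) = succ2 k.
Proof. by apply: val_inj; case: k => -[|[|[|//]]] ?; rewrite /= !inordK. Qed.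

Lemma succ2_succ1 (k : 'I_3) : succ2 (succ1 k) = k.
Proof. by apply: val_inj; case: k => -[|[|[|//]]] ?; rewrite /= !inordK. Qed.

Lemma succ1_succ2 (k : 'I_3) : succ1 (succ2 k) = k.
Proof. by apply: val_inj; case: k => -[|[|[|//]]] ?; rewrite /= !inordK. Qed.

Lemma succ2_succ2 (k : 'I_3) : succ2 (succ2 k) = succ1 k.
Proof. by apply: val_inj; case: k => -[|[|[|//]]] ?; rewrite /= !inordK. Qed.

Lemma big_ord3 (G : 'I_3 -> R) :
  \big[Rplus/0]_(k < 3) G k = G ord0 + G (succ1 ord0) + G (succ2 ord0).
Proof.
rewrite !big_ord_recl big_ord0 Rplus_0_r Rplus_assoc.
by congr (_ + (G _ + G _)); apply: val_inj; rewrite /= inordK.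
Qed.

Lemma ord3_cases (k : 'I_3) : k = ord0 \/ k = succ1 ord0 \/ k = succ2 ord0.
Proof.
case: k => -[|[|[|//]]] ?; [left|right; left|right; right]; apply: val_inj => //=.
all: by rewrite inordK.
Qed.

Section Faces.
Context {n : nat} {F : finType} (vert : F * 'I_3 -> 'I_n) (l0 : F * 'I_3 -> R).

Lemma admissible_segment w w' t :
  admissible vert l0 w -> admissible vert l0 w' -> 0 <= t <= 1 ->
  admissible vert l0 (fun i => w i + t * (w' i - w i)).
Proof.
move=> Hw Hw' t01 s; move: (Hw s) (Hw' s); rewrite /=.
set c := - ln _; set a := w _; set b := w _; set a' := w' _; set b' := w' _.
move=> lt_ab lt_ab'; have := Rmult_le_pos (1 - t) (a + b - c) ltac:(lra) ltac:(lra).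
case: (Req_dec t 0) => [-> | t_neq0]; first lra.
have := Rmult_lt_0_compat t (a' + b' - c) ltac:(lra) ltac:(lra); lra.
Qed.

Lemma admissible_cosh_gt1 w s : admissible vert l0 w ->
  1 < exp (w (vert (sideA s)) + w (vert (sideB s))) * cosh (l0 s / 2).
Proof.
move=> /(_ s) /exp_increasing; rewrite exp_Ropp exp_ln; last first.
  by have := cosh_ge1 (l0 s / 2); lra.
have := cosh_ge1 (l0 s / 2); set k := cosh _ => k_ge1 lt_inv.
have := Rmult_lt_compat_r k _ _ ltac:(lra) lt_inv; rewrite Rinv_l; lra.
Qed.

Lemma len_gt0 w s : admissible vert l0 w -> 0 < len vert l0 w s.
Proof.
by move=> /(admissible_cosh_gt1 _ s) /acosh_gt0; rewrite /len; lra.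
Qed.

Lemma is_derive_len_segment w w' s t :
  admissible vert l0 w -> admissible vert l0 w' -> 0 <= t <= 1 ->
  let u i := w' i - w i in let wt t i := w i + t * u i in
  is_derive (fun t => len vert l0 (wt t) s) t
    (2 * (u (vert (sideA s)) + u (vert (sideB s))) * coth_half (len vert l0 (wt t) s)).
Proof.
move=> Hw Hw' t01 u wt.
pose ua := u (vert (sideA s)); pose ub := u (vert (sideB s)).
pose X t := exp (wt t (vert (sideA s)) + wt t (vert (sideB s))) * cosh (l0 s / 2).
have X_gt1 : 1 < X t := admissible_cosh_gt1 _ s (admissible_segment _ _ _ Hw Hw' t01).
have DX : is_derive X t ((ua + ub) * X t).
  by rewrite /X /wt /ua /ub; auto_derive => //; ring.
have := is_derive_scal _ _ 2 _ (is_derive_comp acosh X t _ _ (is_derive_acosh _ X_gt1) DX).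
move=> D; apply: (eq_ind _ (is_derive _ t) D).
rewrite /len coth_half_acosh // /scal /= /mult /= -/(X t) -/ua -/ub; field.
by apply/Rgt_not_eq/sqrt_lt_R0; nra.
Qed.

Definition face_pairing (u w : 'I_n -> R) (f : F) : R :=
  \big[Rplus/0]_(k < 3) (u (vert (f, k)) * theta vert l0 w (f, k)).

Lemma pairing_Bcurv u w :
  \big[Rplus/0]_i (u i * Bcurv vert l0 w i) = \big[Rplus/0]_f face_pairing u w f.
Proof.
transitivity (\big[Rplus/0]_(c : F * 'I_3) (u (vert c) * theta vert l0 w c)).
  rewrite (partition_big vert xpredT) //=; apply: eq_bigr => i _.
  rewrite /Bcurv (big_morph (Rmult (u i)) (Rmult_plus_distr_l (u i)) (Rmult_0_r (u i))).
  by apply: eq_bigr => c /eqP ->.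
by rewrite /face_pairing pair_bigA; apply: eq_bigr => -[].
Qed.

Lemma face_pairing_decrease w w' f :
  admissible vert l0 w -> admissible vert l0 w' ->
  let u i := w' i - w i in
  face_pairing u w' f <= face_pairing u w f /\
  ((exists k, u (vert (f, k)) <> 0) -> face_pairing u w' f < face_pairing u w f).
Proof.
move=> Hw Hw' u; pose wt t i := w i + t * u i.
pose L k t := len vert l0 (wt t) (f, k).
have DL k t : 0 <= t <= 1 -> 0 < L k t /\
    is_derive (L k) t (2 * (u (vert (f, succ1 k)) + u (vert (f, succ2 k))) * coth_half (L k t)).
  move=> t01; split; first exact/len_gt0/admissible_segment.
  exact: is_derive_len_segment.
have DL1 t : 0 <= t <= 1 -> 0 < L (succ1 ord0) t /\ is_derive (L (succ1 ord0)) t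
    (2 * (u (vert (f, succ2 ord0)) + u (vert (f, ord0))) * coth_half (L (succ1 ord0) t)).
  by move=> /(DL (succ1 ord0)); rewrite succ1_succ1 succ2_succ1.
have DL2 t : 0 <= t <= 1 -> 0 < L (succ2 ord0) t /\ is_derive (L (succ2 ord0)) t
    (2 * (u (vert (f, ord0)) + u (vert (f, succ1 ord0))) * coth_half (L (succ2 ord0) t)).
  by move=> /(DL (succ2 ord0)); rewrite succ1_succ2 succ2_succ2.
have pairing_wt t : face_pairing u (wt t) f =
    u (vert (f, ord0)) * hexagon_side (L ord0 t) (L (succ1 ord0) t) (L (succ2 ord0) t)
    + u (vert (f, succ1 ord0)) * hexagon_side (L (succ1 ord0) t) (L (succ2 ord0) t) (L ord0 t)
    + u (vert (f, succ2 ord0)) * hexagon_side (L (succ2 ord0) t) (L ord0 t) (L (succ1 ord0) t).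
  rewrite /face_pairing big_ord3 /theta /sideA /sideB /=.
  by rewrite succ1_succ1 succ2_succ1 succ1_succ2 succ2_succ2.
have wt1 : wt 1 = w' by apply: functional_extensionality => i; rewrite /wt /u; ring.
have wt0 : wt 0 = w by apply: functional_extensionality => i; rewrite /wt; ring.
have [le lt] := face_pairing_path_decrease _ _ _ _ _ _ (DL ord0) DL1 DL2.
rewrite /= -(pairing_wt 1) -(pairing_wt 0) wt1 wt0 in le lt.
split=> // -[k uk]; apply: lt.
by case: (ord3_cases k) => [e|[e|e]]; rewrite e in uk; tauto.
Qed.

End Faces.

Theorem proposition3p3 (n : nat) (F : finType)
    (sigma : F * 'I_3 -> F * 'I_3) (rev : F * 'I_3 -> bool)
    (vert : F * 'I_3 -> 'I_n) (l0 : F * 'I_3 -> R) :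
  closed_surface_triangulation sigma rev vert ->
  (forall s, 0 < l0 s) ->
  (forall s, l0 (sigma s) = l0 s) ->
  forall w w' : 'I_n -> R,
    admissible vert l0 w -> admissible vert l0 w' ->
    (forall i, Bcurv vert l0 w i = Bcurv vert l0 w' i) ->
    w = w'.
Proof.
(* The argument is local to faces: only the surjectivity of [vert] is used, and
   admissibility alone makes every length positive. *)
move=> [_ [_ [_ [_ [_ vert_onto]]]]] _ _ w w' Hw Hw' eqB.
apply: functional_extensionality => i.
case: (Req_dec (w i) (w' i)) => // w_neq; exfalso.
pose u j := w' j - w j.
have eq_sum : \big[Rplus/0]_f face_pairing vert l0 u w' f = \big[Rplus/0]_f face_pairing vert l0 u w f.
  by rewrite -!pairing_Bcurv; apply: eq_bigr => j _; rewrite eqB.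
have [[f k] vert_fk] := vert_onto i.
suff : \big[Rplus/0]_f face_pairing vert l0 u w' f < \big[Rplus/0]_f face_pairing vert l0 u w f.
  by rewrite eq_sum; apply: Rlt_irrefl.
apply: (Rsum_lt _ _ _ f) => [g|]; first exact: (face_pairing_decrease vert l0 _ _ g Hw Hw').1.
apply: (face_pairing_decrease vert l0 _ _ f Hw Hw').2; exists k.
by rewrite /u vert_fk; lra.
Qed.
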